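(* Let $(d_1,d_2)\in\mathbb N^2$ and $(p,q)\in\mathbb N^2\setminus\{(0,0)\}$. Then (1) $\mathrm{CG}^0_+(p,q)=\varnothing$ if $qd_1\le pd_2$; (2) $\mathrm{CG}^0_-(p,q)=\varnothing$ if $qd_1\ge pd_2$.
   Context: Dyck paths and gradings: for $d_1,d_2\ge0$, $\mathcal P=\mathcal P(d_1,d_2)$ is the highest lattice path of unit east (horizontal) and north (vertical) edges from $(0,0)$ to $(d_1,d_2)$ never passing strictly above the segment joining them; $\mathcal P_{\mathbf E},\mathcal P_{\mathbf N}$ its horizontal/vertical edge sets; for a set $C$ of edges $C_{\mathbf E},C_{\mathbf N}$, $|C|$ as usual; $\overrightarrow{ef}$ is the set of edges from $e$ to $f$ along the path inclusive, continuing cyclically from the last edge to the first if $f$ comes before $e$. A grading is a map $\omega$ from edges to $\mathbb N$, $\omega(C)=\sum_{e\in C}\omega(e)$; it is compatible if for all $u\in\mathcal P_{\mathbf E},v\in\mathcal P_{\mathbf N}$ with $\omega(u)\omega(v)>0$ some $e\in\overrightarrow{uv}$ satisfies either $e\in\mathcal P_{\mathbf N}\setminus\{v\}$ and $|(\overrightarrow{ue})_{\mathbf N}|=\omega((\overrightarrow{ue})_{\mathbf E})$, or $e\in\mathcal P_{\mathbf E}\setminus\{u\}$ and $|(\overrightarrow{ev})_{\mathbf E}|=\omega((\overrightarrow{ev})_{\mathbf N})$. Shadows: $\operatorname{sh}(e)=\emptyset$ if $\omega(e)=0$; for horizontal $e$, $\operatorname{sh}(e)=(\overrightarrow{ev})_{\mathbf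 N}$ where $v$ is vertical with $|(\overrightarrow{ev})_{\mathbf N}|=\omega((\overrightarrow{ev})_{\mathbf E})$ and $\overrightarrow{ev}$ shortest, or $\mathcal P_{\mathbf N}$ if no such $v$; for vertical $e$, $\operatorname{sh}(e)=(\overrightarrow{ue})_{\mathbf E}$ where $u$ is horizontal with $|(\overrightarrow{ue})_{\mathbf E}|=\omega((\overrightarrow{ue})_{\mathbf N})$ and $\overrightarrow{ue}$ shortest, or $\mathcal P_{\mathbf E}$ if none; $\operatorname{sh}(C)=\bigcup_{e\in C}\operatorname{sh}(e)$. Let $\mathrm{CG}^0_+(p,q)$ be the set of compatible gradings $\omega$ on $\mathcal P(d_1,d_2)$ with $\omega(\mathcal P_{\mathbf N})=p$, $\omega(\mathcal P_{\mathbf E})=q$ and $\omega(\mathcal P_{\mathbf N}\setminus\operatorname{sh}(\mathcal P_{\mathbf E}))=0$, and $\mathrm{CG}^0_-(p,q)$ the set of those with $\omega(\mathcal P_{\mathbf N})=p$, $\omega(\mathcal P_{\mathbf E})=q$ and $\omega(\mathcal P_{\mathbf E}\setminus\operatorname{sh}(\mathcal P_{\mathbf N}))=0$. *)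

From mathcomp Require Import all_boot.
Set Implicit Arguments. Unset Strict Implicit. Unset Printing Implicit Defensive.

(* Greedy construction of the highest lattice path from (0,0) to (d1,d2)
   never passing strictly above the segment: from the current point (x,y)
   go North (true) if y < d2 and (x, y+1) lies on/below the segment
   (i.e. (y+1) * d1 <= x * d2), otherwise go East (false). *)
Fixpoint walk (d1 d2 fuel x y : nat) : seq bool :=
  match fuel with
  | 0 => [::]
  | f.+1 => if (y < d2) && ((y.+1) * d1 <= x * d2)
            then true :: walk d1 d2 f x y.+1
            else false :: walk d1 d2 f x.+1 y
  end.

Definition dyck_path (d1 d2 : nat) : seq bool := walk d1 d2 (d1 + d2) 0 0.

Definition isN (d1 d2 : nat) (e : 'I_(d1 + d2)) : bool := nth false (dyck_path d1 d2) e.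

Definition PN (d1 d2 : nat) : {set 'I_(d1 + d2)} := [set e | isN e].
Definition PE (d1 d2 : nat) : {set 'I_(d1 + d2)} := [set e | ~~ isN e].

Definition arc (n : nat) (e f : 'I_n) : {set 'I_n} :=
  [set i : 'I_n | if e <= f then (e <= i) && (i <= f) else (e <= i) || (i <= f)].

Definition wt (n : nat) (w : 'I_n -> nat) (C : {set 'I_n}) : nat := \sum_(i in C) w i.

Definition compatible (d1 d2 : nat) (w : 'I_(d1 + d2) -> nat) : Prop :=
  forall u v, u \in PE d1 d2 -> v \in PN d1 d2 -> 0 < w u * w v ->
    exists2 e, e \in arc u v &
      ((e \in PN d1 d2) /\ e != v /\ #|arc u e :&: PN d1 d2| = wt w (arc u e :&: PE d1 d2))
      \/ ((e \in PE d1 d2) /\ e != u /\ #|arc e v :&: PE d1 d2| = wt w (arc e v :&: PN d1 d2)).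

Definition shE_cand (d1 d2 : nat) (w : 'I_(d1 + d2) -> nat) (e v : 'I_(d1 + d2)) : bool :=
  (v \in PN d1 d2) && (#|arc e v :&: PN d1 d2| == wt w (arc e v :&: PE d1 d2)).
Definition shN_cand (d1 d2 : nat) (w : 'I_(d1 + d2) -> nat) (u e : 'I_(d1 + d2)) : bool :=
  (u \in PE d1 d2) && (#|arc u e :&: PE d1 d2| == wt w (arc u e :&: PN d1 d2)).

Definition sh (d1 d2 : nat) (w : 'I_(d1 + d2) -> nat) (e : 'I_(d1 + d2)) : {set 'I_(d1 + d2)} :=
  if w e == 0 then set0 else
  if e \in PE d1 d2 then
    match [pick v | shE_cand w e v &&
                    [forall v', shE_cand w e v' ==> (#|arc e v| <= #|arc e v'|)]] with
    | Some v => arc e v :&: PN d1 d2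
    | None => PN d1 d2
    end
  else
    match [pick u | shN_cand w u e &&
                    [forall u', shN_cand w u' e ==> (#|arc u e| <= #|arc u' e|)]] with
    | Some u => arc u e :&: PE d1 d2
    | None => PE d1 d2
    end.

Definition shset (d1 d2 : nat) (w : 'I_(d1 + d2) -> nat) (C : {set 'I_(d1 + d2)}) :
  {set 'I_(d1 + d2)} := \bigcup_(e in C) sh w e.

Definition CG0plus (d1 d2 p q : nat) (w : 'I_(d1 + d2) -> nat) : Prop :=
  [/\ compatible w, wt w (PN d1 d2) = p, wt w (PE d1 d2) = q &
      wt w (PN d1 d2 :\: shset w (PE d1 d2)) = 0].

Definition CG0minus (d1 d2 p q : nat) (w : 'I_(d1 + d2) -> nat) : Prop :=
  [/\ compatible w, wt w (PN d1 d2) = p, wt w (PE d1 d2) = q &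
      wt w (PE d1 d2 :\: shset w (PN d1 d2)) = 0].

Arguments CG0plus d1 d2 p q w : clear implicits.
Arguments CG0minus d1 d2 p q w : clear implicits.

From mathcomp Require Import all_boot zify.
Set Implicit Arguments. Unset Strict Implicit. Unset Printing Implicit Defensive.

(* View P(d1, d2) as a cyclic word of north and east edges carrying the weights w, and let
   p and q be the total weight on north and on east edges.  Read from a positive east edge
   u, the balance "east weight minus number of north edges" starts positive and drops by at
   most one per step; its first zero ends the shadow of u.  We show d2 * p < d1 * q as soon
   as every positive north edge lies in the shadow of a positive east edge, which rules out
   CG0_+(p, q) when q d1 <= p d2.
   Pick a positive east edge s whose shadow is longest.  If it goes all the way round, then
   q > d2, while compatibility with s packs the north weight into the d1 - 1 other east
   edges.  Otherwise the maximality of s lets us cut the cycle at s into blocks on which the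
   east weight equals the number of north edges and, by compatibility, the north weight is
   at most the number of east edges; as the Dyck path stays within one step of the
   diagonal, every block satisfies d2 * (north weight) < d1 * (east weight).
   Reading the path backwards exchanges north and east, turning CG0_- into CG0_+. *)

Section CyclicOrdinals.
Variable n : nat.

Definition cdist (e i : 'I_n) : nat := if e <= i then i - e else i + n - e.

Lemma cshift_subproof (b : 'I_n) k : (b + k) %% n < n.
Proof. by apply: ltn_pmod; apply: leq_ltn_trans (ltn_ord b). Qed.

Definition cshift (b : 'I_n) (k : nat) : 'I_n := Ordinal (cshift_subproof b k).
Arguments cshift : simpl never.

Lemma cdist_lt e i : cdist e i < n.
Proof. by rewrite /cdist; case: (leqP e i); have := ltn_ord e; have := ltn_ord i; lia. Qed.

Lemma mem_arc e f i : (i \in arc e f) = (cdist e i <= cdist e f).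
Proof.
rewrite inE /cdist; have := ltn_ord e; have := ltn_ord i; have := ltn_ord f.
by case: (leqP e f); case: (leqP e i); case: (leqP i f) => *; apply/idP/idP; lia.
Qed.

Lemma cshift_cdist e i : cshift e (cdist e i) = i.
Proof.
apply: val_inj => /=; rewrite /cdist; have := ltn_ord i; case: (leqP e i) => ei ilt.
  by rewrite subnKC // modn_small.
have -> : e + (i + n - e) = i + n by have := ltn_ord e; lia.
by rewrite modnDr modn_small.
Qed.

Lemma cdist_cshift e k : k < n -> cdist e (cshift e k) = k.
Proof.
move=> kn; rewrite /cdist /=; have := ltn_ord e.
case: (ltnP (e + k) n) => ekn en.
  by rewrite modn_small //; case: ifP => /leP; lia.
rewrite -[e + k](subnK ekn) modnDr modn_small; last by lia.
by case: ifP => /leP; lia.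
Qed.

Lemma cshiftD b a k : cshift (cshift b a) k = cshift b (a + k).
Proof. by apply: val_inj => /=; rewrite modnDml addnA. Qed.

Lemma cshift_addn b k : cshift b (k + n) = cshift b k.
Proof. by apply: val_inj => /=; rewrite addnA modnDr. Qed.

Lemma cshift0 b : cshift b 0 = b.
Proof. by apply: val_inj => /=; rewrite addn0 modn_small. Qed.

Implicit Types (b : 'I_n) (X : 'I_n -> nat).

Definition segsum b X i j := \sum_(i <= k < j) X (cshift b k).

Lemma segsum_cat b X i m j :
  i <= m -> m <= j -> segsum b X i j = segsum b X i m + segsum b X m j.
Proof. by move=> im mj; rewrite /segsum (big_cat_nat im mj). Qed.

Lemma segsum0 b X i : segsum b X i i = 0.
Proof. by rewrite /segsum big_geq. Qed.

Lemma segsum1 b X i : segsum b X i i.+1 = X (cshift b i).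
Proof. by rewrite /segsum big_nat1. Qed.

Lemma segsumS b X i j : i <= j -> segsum b X i j.+1 = segsum b X i j + X (cshift b j).
Proof. by move=> ij; rewrite (@segsum_cat b X i j j.+1) // segsum1. Qed.

Lemma segsum_cshift b a X i j : segsum (cshift b a) X i j = segsum b X (a + i) (a + j).
Proof.
rewrite /segsum; case: (leqP i j) => ij; last by rewrite !big_geq //; lia.
rewrite [in RHS]addnC [X in _ = \sum_(_ <= _ < X) _]addnC big_addn.
have -> : j + a - a = j by lia.
by apply: eq_bigr => k _; rewrite cshiftD addnC.
Qed.

Lemma segsum_addn b X i j : segsum b X (i + n) (j + n) = segsum b X i j.
Proof.
rewrite /segsum big_addn; have -> : j + n - n = j by lia.
by apply: eq_bigr => k _; rewrite cshift_addn.
Qed.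

Lemma sum_arc e f (F : 'I_n -> nat) :
  \sum_(i in arc e f) F i = segsum e F 0 (cdist e f).+1.
Proof.
rewrite /segsum.
have cshift_bij : bijective (fun k : 'I_n => cshift e k).
  exists (fun i => Ordinal (cdist_lt e i)) => [k|i]; last by rewrite /= cshift_cdist.
  by apply: val_inj; rewrite /= cdist_cshift.
rewrite (reindex _ (onW_bij _ cshift_bij)) /=.
rewrite (eq_bigl (fun k : 'I_n => k <= cdist e f)); last first.
  by move=> k; rewrite mem_arc cdist_cshift.
rewrite -(big_mkord (fun k => k <= cdist e f) (fun k => F (cshift e k))).
rewrite (big_nat_widen _ _ _ _ _ (cdist_lt e f)).
by apply: eq_bigl => k; rewrite ltnS.
Qed.

Lemma card_arc e f : #|arc e f| = (cdist e f).+1.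
Proof. by rewrite -sum1_card sum_arc /segsum big_const_nat iter_addn; lia. Qed.

Lemma sum_arc_cshift b a c X : a <= c -> c < a + n ->
  \sum_(i in arc (cshift b a) (cshift b c)) X i = segsum b X a c.+1.
Proof.
move=> ac can; have -> : cshift b c = cshift (cshift b a) (c - a) by rewrite cshiftD subnKC.
rewrite sum_arc cdist_cshift; last by lia.
by rewrite segsum_cshift addn0 addnS subnKC.
Qed.

Lemma sum_arc_origin b (e f : 'I_n) X : b = 0 :> nat ->
  \sum_(i in arc e f) X i = segsum b X e (e + (cdist e f).+1).
Proof.
move=> b0; have e_b : cshift b e = e by apply: val_inj; rewrite /cshift /= b0 add0n modn_small.
by rewrite sum_arc -{1}e_b segsum_cshift addn0.
Qed.

Lemma segsum_full b X : segsum b X 0 n = \sum_i X i.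
Proof.
have n_gt0 : 0 < n by apply: leq_ltn_trans (ltn_ord b).
have := @sum_arc_cshift b 0 n.-1 X (leq0n _); rewrite add0n prednK // => <-; last by lia.
apply: eq_bigl => i; rewrite mem_arc cshift0 cdist_cshift; last by lia.
by have := cdist_lt b i; lia.
Qed.

Lemma mem_arc_rev (a b i : 'I_n) :
  (rev_ord i \in arc (rev_ord b) (rev_ord a)) = (i \in arc a b).
Proof.
rewrite !inE /=; have := ltn_ord a; have := ltn_ord b; have := ltn_ord i.
by case: (leqP a b); case: (leqP (n - b.+1) (n - a.+1)) => *; apply/idP/idP; lia.
Qed.

Lemma sum_arc_rev (a b : 'I_n) (F : 'I_n -> nat) :
  \sum_(i in arc (rev_ord b) (rev_ord a)) F i = \sum_(i in arc a b) F (rev_ord i).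
Proof.
rewrite (reindex_inj rev_ord_inj) /=.
by apply: eq_bigl => i; rewrite mem_arc_rev.
Qed.

Lemma card_arc_rev (a b : 'I_n) : #|arc (rev_ord b) (rev_ord a)| = #|arc a b|.
Proof. by rewrite -!sum1_card sum_arc_rev. Qed.

Lemma sum_rev_ordE (F G : 'I_n -> nat) :
  (forall i, F (rev_ord i) = G i) -> \sum_i F i = \sum_i G i.
Proof. by move=> FG; rewrite (reindex_inj rev_ord_inj); apply: eq_bigr => i _. Qed.

Lemma mem_arc_card_le (e a b i : 'I_n) :
  #|arc e a| <= #|arc e b| -> i \in arc e a -> i \in arc e b.
Proof. by rewrite !card_arc !mem_arc ltnS => ab ia; apply: leq_trans ab. Qed.

Lemma mem_arc_card_le_end (f a b i : 'I_n) :
  #|arc a f| <= #|arc b f| -> i \in arc a f -> i \in arc b f.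
Proof.
rewrite -(card_arc_rev a f) -(card_arc_rev b f) -(mem_arc_rev a f i) -(mem_arc_rev b f i).
exact: mem_arc_card_le.
Qed.

End CyclicOrdinals.

Lemma sum_gt0_witness (T : finType) (F : T -> nat) : 0 < \sum_i F i -> exists i, 0 < F i.
Proof. by rewrite lt0n sum_nat_eq0 => /forallPn [i]; rewrite -lt0n; exists i. Qed.

Section Word.
Variables (n : nat) (north : 'I_n -> bool) (w : 'I_n -> nat).

Definition cntN i : nat := north i.
Definition cntE i : nat := ~~ north i.
Definition wtN i := if north i then w i else 0.
Definition wtE i := if north i then 0 else w i.
Local Arguments cntN i /.
Local Arguments cntE i /.
Local Arguments wtN i /.
Local Arguments wtE i /.

Lemma segsum_cntEN b i j : i <= j -> segsum b cntE i j + segsum b cntN i j = j - i.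
Proof.
move=> ij; rewrite /segsum -big_split /=.
rewrite (eq_bigr (fun _ => 1)); last by move=> k _; case: north.
by rewrite big_const_nat iter_addn; lia.
Qed.

Definition shadow_end (u : 'I_n) k :=
  north (cshift u k) && (segsum u cntN 0 k.+1 == segsum u wtE 0 k.+1).

(* For a positive east edge u, sh(u) is the set of north edges at offsets at most
   [shadow_len u] from u, and [shadow_len u = n] exactly when sh(u) is all of P_N. *)
Definition shadow_len u := find (shadow_end u) (iota 0 n).

Lemma shadow_len_le u : shadow_len u <= n.
Proof. by have := find_size (shadow_end u) (iota 0 n); rewrite size_iota. Qed.

Lemma shadow_end_len u : shadow_len u < n -> shadow_end u (shadow_len u).
Proof.
move=> un; have := @nth_find _ 0 (shadow_end u) (iota 0 n).
by rewrite has_find size_iota nth_iota //; apply.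
Qed.

Lemma before_shadow_len u k : k < shadow_len u -> ~~ shadow_end u k.
Proof.
move=> ku; have := @before_find _ 0 (shadow_end u) (iota 0 n) k ku.
by rewrite nth_iota ?add0n => [->|]; last by have := shadow_len_le u; lia.
Qed.

Lemma shadow_len_min u k : k < n -> shadow_end u k -> shadow_len u <= k.
Proof. by move=> kn uk; rewrite leqNgt; apply: contraL uk => /before_shadow_len. Qed.

Section PositiveEast.
Variable u : 'I_n.
Hypotheses (u_east : ~~ north u) (u_pos : 0 < w u).

Lemma shadow_balance_lt k :
  k < shadow_len u -> segsum u cntN 0 k.+1 < segsum u wtE 0 k.+1.
Proof.
(* The balance is positive at u and drops by at most one per step, only at north edges. *)
elim: k => [|k IH] ku; first by rewrite !segsum1 cshift0 /= (negbTE u_east).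
have := IH (ltnW ku); have := before_shadow_len ku; rewrite /shadow_end.
rewrite !(segsumS _ _ (leq0n k.+1)) /=.
by case: north => /= [/eqP|]; lia.
Qed.

Lemma shadow_balance_le k :
  k <= shadow_len u -> k < n -> segsum u cntN 0 k.+1 <= segsum u wtE 0 k.+1.
Proof.
rewrite leq_eqVlt => /orP [/eqP ->|/shadow_balance_lt/ltnW //] un.
by case/andP: (shadow_end_len un) => _ /eqP ->.
Qed.

Lemma shadow_len_lt_of_balance m : 0 < m -> m <= n ->
  segsum u wtE 0 m < segsum u cntN 0 m -> (shadow_len u).+2 <= m.
Proof.
case: m => // k _ kn bal; rewrite ltnNge ltnS; apply: contraL bal => ku.
by rewrite -leqNgt shadow_balance_le.
Qed.

End PositiveEast.

Definition shadow_cand (u v : 'I_n) :=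
  north v && (\sum_(i in arc u v) cntN i == \sum_(i in arc u v) wtE i).

Lemma shadow_cand_end u v : shadow_cand u v = shadow_end u (cdist u v).
Proof. by rewrite /shadow_cand /shadow_end cshift_cdist !sum_arc. Qed.

Lemma shadow_len_ge u v :
  (forall v', shadow_cand u v' -> v \in arc u v') -> cdist u v <= shadow_len u.
Proof.
move=> before_cands; case: (ltnP (shadow_len u) n) => [un|]; last first.
  by apply: leq_trans; apply: ltnW (cdist_lt u v).
have := before_cands (cshift u (shadow_len u)).
by rewrite mem_arc shadow_cand_end !cdist_cshift //; apply; apply: shadow_end_len.
Qed.

Definition word_compatible := forall u v, ~~ north u -> north v -> 0 < w u * w v ->
  exists2 e, e \in arc u v &
    (north e /\ e != v /\ \sum_(i in arc u e) cntN i = \sum_(i in arc u e) wtE i) \/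
    (~~ north e /\ e != u /\ \sum_(i in arc e v) cntE i = \sum_(i in arc e v) wtN i).

Lemma compatible_offsets u v : word_compatible ->
  ~~ north u -> north v -> 0 < w u -> 0 < w v ->
  (exists2 k, k < cdist u v & shadow_end u k) \/
  (exists2 k, 0 < k <= cdist u v & ~~ north (cshift u k) /\
     segsum u cntE k (cdist u v).+1 = segsum u wtN k (cdist u v).+1).
Proof.
move=> compat uE vN uw vw; have : 0 < w u * w v by rewrite muln_gt0 uw vw.
case/(compat _ _ uE vN) => e; rewrite mem_arc => e_in [[eN [ev eqs]]|[eE [eu eqs]]].
  left; exists (cdist u e).
    rewrite ltn_neqAle e_in andbT; apply: contra ev => /eqP de.
    by rewrite -(cshift_cdist u e) de cshift_cdist.
  by rewrite -shadow_cand_end /shadow_cand eN eqs eqxx.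
right; exists (cdist u e); rewrite ?e_in ?cshift_cdist ?andbT.
  by rewrite lt0n; apply: contra eu => /eqP de; rewrite -(cshift_cdist u e) de cshift0.
split=> //; have vlt : cdist u v < cdist u e + n by have := cdist_lt u v; lia.
have arcE X := @sum_arc_cshift n u _ _ X e_in vlt.
by rewrite -!arcE !cshift_cdist.
Qed.

Lemma segsum_wtN_le_cntE b a j :
  (forall c, a < c -> c < j -> north (cshift b c) -> 0 < w (cshift b c) ->
     exists2 b', a < b' <= c & segsum b cntE b' c.+1 = segsum b wtN b' c.+1) ->
  forall t, a < t -> t <= j -> segsum b wtN a.+1 t <= segsum b cntE a.+1 t.
Proof.
move=> witness; elim/ltn_ind=> t IH a_t tj.
case: (ltngtP t a.+1) => [|a_t'|<-]; [lia | | by rewrite !segsum0].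
have [t' def_t] : exists t', t = t'.+1 by exists t.-1; lia.
subst t; have IH' m : a < m <= t' -> segsum b wtN a.+1 m <= segsum b cntE a.+1 m.
  by case/andP=> am mt; apply: IH; lia.
case: (boolP (north (cshift b t') && (0 < w (cshift b t')))) => [/andP [tN tw]|t_idle].
  have [b' /andP [ab' bt'] eqb'] := witness t' a_t' tj tN tw.
  have b't : b' <= t'.+1 by apply: leqW.
  rewrite (segsum_cat _ _ ab' b't) [X in _ <= X](segsum_cat _ _ ab' b't) eqb'.
  by rewrite leq_add2r IH' ?ab'.
have t_wt0 : wtN (cshift b t') = 0.
  by move: t_idle => /=; case: north; rewrite //= -leqNgt leqn0 => /eqP.
rewrite !segsumS // t_wt0 addn0; apply: leq_trans (leq_addr _ _).
by apply: IH'; rewrite leqnn andbT.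
Qed.

Definition shadow_covered := forall v, north v -> 0 < w v ->
  exists2 u, ~~ north u && (0 < w u) & cdist u v <= shadow_len u.

Definition slope_bounded (d1 d2 : nat) := forall e f, ~~ north e -> north f ->
  d2 * \sum_(i in arc e f) cntE i < d2 + d1 * \sum_(i in arc e f) cntN i.

Section Slope.
Variables d1 d2 : nat.
Hypotheses (compat : word_compatible) (cover : shadow_covered) (slope : slope_bounded d1 d2).

Section MaximalShadow.
Variable s : 'I_n.
Hypotheses (s_east : ~~ north s) (s_pos : 0 < w s) (s_len : shadow_len s < n).
Hypothesis s_max : forall u, ~~ north u && (0 < w u) -> shadow_len u <= shadow_len s.

Lemma no_positive_wrap a : 0 < a < n ->
  ~~ north (cshift s a) -> 0 < w (cshift s a) ->
  ~ (forall t, a < t <= n -> segsum s cntN a t < segsum s wtE a t).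
Proof.
(* Otherwise the shadow of [cshift s a] runs past s and ends inside the shadow of s,
   so it is longer than the shadow of s. *)
move=> /andP [a_gt0 an] aE aw run.
have k_le : shadow_len (cshift s a) <= shadow_len s by apply: s_max; rewrite aE aw.
have := shadow_end_len (leq_ltn_trans k_le s_len); rewrite /shadow_end => /andP [_ /eqP].
rewrite !segsum_cshift addn0; move: k_le; set k := shadow_len _ => k_le end_k.
have wraps : n < a + k.+1.
  by rewrite ltnNge; apply/negP => kn; have := run (a + k.+1); rewrite end_k ltnn; lia.
set m := a + k.+1 - n.
have wrap X : segsum s X a (a + k.+1) = segsum s X a n + segsum s X 0 m.
  rewrite (@segsum_cat _ s X a n) ?(ltnW an) ?(ltnW wraps) //.
  by rewrite -(segsum_addn s X 0 m) add0n /m subnK // ltnW.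
have := run n; rewrite an leqnn => /(_ isT); move: end_k; rewrite !wrap => end_k run_n.
have bal : segsum s wtE 0 m < segsum s cntN 0 m by lia.
have := shadow_len_lt_of_balance s_east s_pos (_ : 0 < m) (_ : m <= n) bal; lia.
Qed.

Lemma covering_offset_le c : c < n -> north (cshift s c) -> 0 < w (cshift s c) ->
  exists2 a, a <= c &
    [/\ ~~ north (cshift s a), 0 < w (cshift s a) & c - a <= shadow_len (cshift s a)].
Proof.
move=> cn cN cw; have [u /andP [uE uw] u_len] := cover cN cw.
have [a an def_u] : exists2 a, a < n & u = cshift s a.
  by exists (cdist s u); rewrite ?cdist_lt ?cshift_cdist.
subst u; case: (leqP a c) => [ac|ca].
  exists a => //; split => //; move: u_len.
  have -> : cshift s c = cshift (cshift s a) (c - a) by rewrite cshiftD subnKC.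
  by rewrite cdist_cshift //; lia.
exfalso; move: u_len.
have -> : cshift s c = cshift (cshift s a) (c + n - a).
  by rewrite cshiftD -cshift_addn; congr cshift; lia.
rewrite cdist_cshift; last by lia.
move=> u_len; apply: (@no_positive_wrap a) => //; first by lia.
move=> t /andP [a_t tn]; have lt_len : t - a - 1 < shadow_len (cshift s a) by lia.
have := shadow_balance_lt uE uw lt_len; rewrite !segsum_cshift addn0.
by have -> : a + (t - a - 1).+1 = t by lia.
Qed.

Lemma covering_offset c : c < n -> north (cshift s c) -> 0 < w (cshift s c) ->
  exists2 a, a <= c &
    [/\ forall t, a <= t < c -> segsum s cntN a t.+1 < segsum s wtE a t.+1,
        segsum s cntN a c.+1 <= segsum s wtE a c.+1 &
        exists2 b, a < b <= c & segsum s cntE b c.+1 = segsum s wtN b c.+1].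
Proof.
move=> cn cN cw; have [a ac [aE aw a_len]] := covering_offset_le cn cN cw.
exists a => //; set u := cshift s a in aE aw a_len *.
have dist_uc : cdist u (cshift s c) = c - a.
  by rewrite /u -{1}(subnKC ac) -cshiftD cdist_cshift //; lia.
split.
- move=> t /andP [a_t tc]; have lt_len : t - a < shadow_len u by lia.
  have := shadow_balance_lt aE aw lt_len; rewrite !segsum_cshift addn0.
  by rewrite addnS subnKC.
- have ca_n : c - a < n by lia.
  have := shadow_balance_le aE aw a_len ca_n; rewrite !segsum_cshift addn0.
  by rewrite addnS subnKC.
case: (compatible_offsets compat aE cN aw cw); rewrite dist_uc.
  case=> k k_lt k_end; have k_len : k < shadow_len u by lia.
  by rewrite (negbTE (before_shadow_len k_len)) in k_end.
case=> k /andP [k_gt0 k_le] [_ eq_k]; exists (a + k); first by lia.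
by move: eq_k; rewrite !segsum_cshift addnS subnKC.
Qed.

(* The unshaded offsets cut the cycle at s into blocks on which the slope bound can be
   proved separately. *)
Definition unshaded j := all (fun a => segsum s wtE a j <= segsum s cntN a j) (iota 0 j.+1).

Lemma unshadedP j a : unshaded j -> a <= j -> segsum s wtE a j <= segsum s cntN a j.
Proof. by move=> /allP free_j aj; apply: free_j; rewrite mem_iota; lia. Qed.

Lemma unshadedPn j : ~~ unshaded j -> exists2 a, a < j & segsum s cntN a j < segsum s wtE a j.
Proof.
case/allPn => a; rewrite mem_iota add0n ltnS -ltnNge => /andP [_ aj] bal; exists a => //.
by rewrite ltn_neqAle aj andbT; apply: contraTneq bal => ->; rewrite !segsum0.
Qed.

Lemma unshaded0 : unshaded 0.
Proof. by rewrite /unshaded /= !segsum0. Qed.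

Lemma unshaded_n : unshaded n.
Proof.
apply/negPn/negP => /unshadedPn [a0 a0n bal0].
pose P a := (a < n) && (segsum s cntN a n < segsum s wtE a n).
have exP : exists a, P a by exists a0; rewrite /P a0n.
have ubP a : P a -> a <= n by case/andP=> an _; apply: ltnW.
have [a /andP [an bal] a_max] := ex_maxnP exP ubP.
have run t : a < t <= n -> segsum s cntN a t < segsum s wtE a t.
  case/andP=> a_t tn; rewrite ltnNge; apply/negP => le_t.
  have bal_t : segsum s cntN t n < segsum s wtE t n.
    by move: bal; rewrite !(segsum_cat _ _ (ltnW a_t) tn); lia.
  have tn' : t < n.
    by rewrite ltn_neqAle tn andbT; apply: contraTneq bal_t => ->; rewrite !segsum0.
  by have := a_max t; rewrite /P tn' bal_t => /(_ isT); lia.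
case: (posnP a) => [a_eq0|a_gt0].
  have := run (shadow_len s).+1; rewrite a_eq0 ltnS leq0n s_len => /(_ isT).
  by case/andP: (shadow_end_len s_len) => _ /eqP ->; rewrite ltnn.
have := run a.+1; rewrite ltnSn an => /(_ isT); rewrite !segsum1 /=.
case: ifP => // aN aw; apply: (@no_positive_wrap a) => //; rewrite ?a_gt0 ?an ?aN //.
Qed.

Lemma last_unshaded j : 0 < j ->
  exists2 a, a < j & unshaded a /\ forall a', a < a' < j -> ~~ unshaded a'.
Proof.
move=> j_gt0; pose P a := (a < j) && unshaded a.
have exP : exists a, P a by exists 0; rewrite /P j_gt0 unshaded0.
have ubP a : P a -> a <= j by case/andP=> aj _; apply: ltnW.
have [a /andP [aj free_a] a_max] := ex_maxnP exP ubP.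
exists a => //; split => // a' /andP [aa' a'j]; apply: contraL aa' => free_a'.
by rewrite -leqNgt a_max // /P a'j.
Qed.

Lemma unshaded_succ_idle a : a < n -> unshaded a -> unshaded a.+1 -> w (cshift s a) = 0.
Proof.
move=> an free_a free_a1; apply/eqP; rewrite -leqn0 leqNgt; apply/negP => aw.
case aN: (north (cshift s a)).
  have [b ba [_ bal _]] := covering_offset an aN aw.
  by have := unshadedP free_a ba; move: bal; rewrite !(segsumS _ _ ba) /= aN; lia.
by have := unshadedP free_a1 (leqnSn a); rewrite !segsum1 /= aN; lia.
Qed.

Lemma shaded_run a j : unshaded a -> (forall a', a < a' < j -> ~~ unshaded a') ->
  forall t, a < t < j -> segsum s cntN a t < segsum s wtE a t.
Proof.
move=> free_a nonfree; elim/ltn_ind => t IH /andP [a_t tj].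
have [a' a't bal'] := unshadedPn (nonfree t (ltac:(lia))).
case: (leqP a' a) => [a'a|aa'].
  by have := unshadedP free_a a'a; move: bal'; rewrite !(segsum_cat _ _ a'a (ltnW a_t)); lia.
have := IH a' a't; rewrite aa' (ltn_trans a't tj) => /(_ isT).
by move: bal'; rewrite !(segsum_cat _ _ (ltnW aa') (ltnW a't)); lia.
Qed.

Lemma witness_after a c : unshaded a -> a < c -> c < n ->
  north (cshift s c) -> 0 < w (cshift s c) ->
  exists2 b, a < b <= c & segsum s cntE b c.+1 = segsum s wtN b c.+1.
Proof.
move=> free_a ac cn cN cw.
have [av _ [run_av _ [b /andP [avb bc] eq_b]]] := covering_offset cn cN cw.
exists b => //; rewrite bc andbT ltnNge; apply/negP => ba.
have ava : av < a by apply: leq_trans ba.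
have := unshadedP free_a (ltnW ava).
have := run_av a.-1 (ltac:(apply/andP; split; lia)); rewrite prednK; last by lia.
lia.
Qed.

Lemma unshaded_block_ratio a j : a.+1 < j -> j <= n -> unshaded a -> unshaded j ->
  (forall a', a < a' < j -> ~~ unshaded a') ->
  d2 * segsum s wtN a j < d1 * segsum s wtE a j.
Proof.
move=> aj jn free_a free_j nonfree; have run := shaded_run free_a nonfree.
have [j' def_j] : exists j', j = j'.+1 by exists j.-1; lia.
subst j; have aj' : a < j' by [].
have [j'N eq_j] : north (cshift s j') /\ segsum s cntN a j'.+1 = segsum s wtE a j'.+1.
  have := run j'; rewrite aj' ltnSn => /(_ isT).
  have := unshadedP free_j (leqW (ltnW aj')); rewrite !segsumS ?(ltnW aj') //=.
  by case: north => /=; lia.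
have [aE aw] : ~~ north (cshift s a) /\ 0 < w (cshift s a).
  have := run a.+1; rewrite ltnSn aj => /(_ isT); rewrite !segsum1 /=.
  by case: north.
have packed : segsum s wtN a.+1 j'.+1 <= segsum s cntE a.+1 j'.+1.
  apply: (segsum_wtN_le_cntE _ (ltnW aj) (leqnn j'.+1)) => c ac cj cN cw.
  exact: witness_after (leq_trans cj jn) cN cw.
have j'_lt : j' < a + n by lia.
have := slope aE j'N; rewrite !(sum_arc_cshift s _ (ltnW aj') j'_lt).
move: eq_j; rewrite !(segsum_cat _ _ (leqnSn a) (ltnW aj)) !segsum1 /= (negbTE aE).
by have := leq_mul (leqnn d2) packed; lia.
Qed.

Lemma unshaded_ratio j : 0 < j -> j <= n -> unshaded j ->
  d2 * segsum s wtN 0 j < d1 * segsum s wtE 0 j.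
Proof.
elim/ltn_ind: j => j IH j_gt0 jn free_j.
have [a aj [free_a nonfree]] := last_unshaded j_gt0.
have IH_a : 0 < a -> d2 * segsum s wtN 0 a < d1 * segsum s wtE 0 a.
  by move=> a_gt0; apply: IH => //; apply: ltnW (leq_trans aj jn).
rewrite !(segsum_cat _ _ (leq0n a) (ltnW aj)) !mulnDr.
case: (ltngtP a.+1 j) => [a1j||a1j]; [| lia | ].
  have := unshaded_block_ratio a1j jn free_a free_j nonfree.
  case: (posnP a) => [->|/IH_a]; first by rewrite !segsum0; lia.
  lia.
subst j; have idle := unshaded_succ_idle jn free_a free_j.
rewrite !segsum1 /= idle !if_same !muln0 !addn0.
case: (posnP a) => [a0|/IH_a //].
by move: idle s_pos; rewrite a0 cshift0 => ->.
Qed.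

End MaximalShadow.

Hypotheses (cntE_total : \sum_i cntE i = d1) (cntN_total : \sum_i cntN i = d2).

Lemma full_shadow_slope s : ~~ north s -> 0 < w s -> shadow_len s = n ->
  d2 * \sum_i wtN i < d1 * \sum_i wtE i.
Proof.
move=> sE sw s_full; have n_gt0 : 0 < n by apply: leq_ltn_trans (ltn_ord s).
have wtE_big : d2 < \sum_i wtE i.
  have last_lt : n.-1 < shadow_len s by rewrite s_full prednK.
  by have := shadow_balance_lt sE sw last_lt; rewrite prednK // !segsum_full cntN_total.
have packed : segsum s wtN 1 n <= segsum s cntE 1 n.
  apply: (segsum_wtN_le_cntE _ n_gt0 (leqnn n)) => c c_gt0 cn cN cw.
  case: (compatible_offsets compat sE cN sw cw); rewrite cdist_cshift //.
    by case=> k kc k_end; have := shadow_len_min (ltn_trans kc cn) k_end; lia.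
  by case=> k kc [_ eq_k]; exists k.
have d1_gt0 : 0 < d1.
  by rewrite -cntE_total (bigD1 s) //= sE.
have wtN_small : \sum_i wtN i <= d1.-1.
  move: packed; rewrite -cntE_total -!(segsum_full s) !(segsum_cat _ _ (leq0n 1) n_gt0).
  by rewrite !segsum1 cshift0 /= (negbTE sE); lia.
have := leq_mul (leqnn d2) wtN_small; have := leq_mul (leqnn d1) wtE_big.
rewrite -(prednK d1_gt0); lia.
Qed.

Lemma exists_positive_east : 0 < \sum_i wtN i + \sum_i wtE i ->
  exists u, ~~ north u && (0 < w u).
Proof.
case: (posnP (\sum_i wtE i)) => [-> | /sum_gt0_witness [u]]; last first.
  by rewrite /=; case: ifP => // uN uw; exists u; rewrite uN.
rewrite addn0 => /sum_gt0_witness [v] /=; case: ifP => // vN vw.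
by have [u u_pos _] := cover vN vw; exists u.
Qed.

Theorem weighted_slope_lt : 0 < \sum_i wtN i + \sum_i wtE i ->
  d2 * \sum_i wtN i < d1 * \sum_i wtE i.
Proof.
move=> /exists_positive_east [u0 u0_pos].
have [s /andP [sE sw] s_max] :=
  @arg_maxnP _ u0 (fun u => ~~ north u && (0 < w u)) shadow_len u0_pos.
case: (ltngtP (shadow_len s) n) => [s_len||s_full]; last exact: full_shadow_slope sE sw s_full.
  have n_gt0 : 0 < n by apply: leq_ltn_trans (ltn_ord s).
  have := unshaded_ratio sE sw s_len s_max n_gt0 (leqnn n) (unshaded_n sE sw s_len s_max).
  by rewrite !segsum_full.
by have := shadow_len_le s; lia.
Qed.

End Slope.

End Word.

Arguments cntN [n] north i /.
Arguments cntE [n] north i /.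
Arguments wtN [n] north w i /.
Arguments wtE [n] north w i /.

Section Reversal.
Variables (n : nat) (north : 'I_n -> bool) (w : 'I_n -> nat).

Definition rev_north i := ~~ north (rev_ord i).
Definition rev_wt i := w (rev_ord i).

Lemma cntN_rev i : cntN rev_north (rev_ord i) = cntE north i.
Proof. by rewrite /cntN /cntE /rev_north rev_ordK. Qed.

Lemma cntE_rev i : cntE rev_north (rev_ord i) = cntN north i.
Proof. by rewrite /cntN /cntE /rev_north rev_ordK negbK. Qed.

Lemma wtN_rev i : wtN rev_north rev_wt (rev_ord i) = wtE north w i.
Proof. by rewrite /wtN /wtE /rev_north /rev_wt rev_ordK; case: north. Qed.

Lemma wtE_rev i : wtE rev_north rev_wt (rev_ord i) = wtN north w i.
Proof. by rewrite /wtN /wtE /rev_north /rev_wt rev_ordK; case: north. Qed.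

Lemma sum_arc_revE (a b : 'I_n) (F : 'I_n -> nat) :
  \sum_(i in arc a b) F i = \sum_(i in arc (rev_ord b) (rev_ord a)) F (rev_ord i).
Proof. by rewrite -sum_arc_rev !rev_ordK. Qed.

Lemma rev_word_compatible : word_compatible north w -> word_compatible rev_north rev_wt.
Proof.
move=> compat u' v' u'E v'N wuv; set u := rev_ord v'; set v := rev_ord u'.
have vN : north v by rewrite -[north v]negbK.
have wuv' : 0 < w u * w v by rewrite mulnC.
have rev_in x : x \in arc u v -> rev_ord x \in arc u' v'.
  by rewrite -(rev_ordK u') -(rev_ordK v') mem_arc_rev.
case: (compat u v v'N vN wuv') => e /rev_in e_in [[eN [ev eqs]]|[eE [eu eqs]]];
  exists (rev_ord e) => //.
- right; rewrite /rev_north rev_ordK eN -(rev_ordK u') (inj_eq rev_ord_inj) ev.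
  do 2!split => //.
  rewrite (sum_arc_revE _ _ (cntE _)) (sum_arc_revE _ _ (wtN _ _)) !rev_ordK.
  by under eq_bigr do rewrite cntE_rev; under [RHS]eq_bigr do rewrite wtN_rev.
left; rewrite /rev_north rev_ordK eE -(rev_ordK v') (inj_eq rev_ord_inj) eu.
do 2!split => //.
rewrite (sum_arc_revE _ _ (cntN _)) (sum_arc_revE _ _ (wtE _ _)) !rev_ordK.
by under eq_bigr do rewrite cntN_rev; under [RHS]eq_bigr do rewrite wtE_rev.
Qed.

End Reversal.

Section DyckPath.
Variables d1 d2 : nat.
Local Notation n := (d1 + d2).
Local Notation P := (dyck_path d1 d2).

(* (x, y) lies weakly below the diagonal while (x - 1, y + 1) lies strictly above it. *)
Definition near_diagonal x y :=
  [/\ y <= d2, y * d1 <= x * d2 & x * d2 < y * d1 + d1 + d2].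

Lemma near_diagonal_step x y : near_diagonal x y -> x + y < n ->
  if (y < d2) && (y.+1 * d1 <= x * d2)
  then near_diagonal x y.+1 /\ y.+1 * d1 <= x * d2
  else near_diagonal x.+1 y /\ x * d2 < y.+1 * d1.
Proof.
case=> y_le below above xy_lt; case: ifP => [/andP [y_lt step]|north_blocked].
  by do !split => //; lia.
have east : x * d2 < y.+1 * d1.
  move/negbT: north_blocked; rewrite negb_and -!ltnNge => /orP [y_ge|//].
  have x_lt : x < d1 by lia.
  by have := leq_mul (ltnW x_lt) (leqnn d2); nia.
by do !split => //; lia.
Qed.

Definition npre (s : seq bool) k := \sum_(0 <= i < k) nth false s i.

Lemma npre0 s : npre s 0 = 0.
Proof. by rewrite /npre big_geq. Qed.

Lemma npre_cons b s k : npre (b :: s) k.+1 = b + npre s k.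
Proof. by rewrite /npre big_nat_recl. Qed.

Lemma npreS s k : npre s k.+1 = npre s k + nth false s k.
Proof. by rewrite /npre big_nat_recr. Qed.

Lemma npre_le s k : npre s k <= k.
Proof. by elim: k => [|k IH]; rewrite ?npre0 // npreS; case: nth; lia. Qed.

Lemma walk_near_diagonal f x y : x + y + f = n -> near_diagonal x y ->
  forall k, k <= f ->
    let s := walk d1 d2 f x y in
    let Y := y + npre s k in let X := x + k - npre s k in
    near_diagonal X Y /\
    (k < f -> if nth false s k then Y.+1 * d1 <= X * d2 else X * d2 < Y.+1 * d1).
Proof.
elim: f x y => [|f IH] x y sum_xy near_xy k kf /=.
  have -> : k = 0 by lia.
  by rewrite npre0 !addn0 subn0.
have xy_lt : x + y < n by lia.
have := near_diagonal_step near_xy xy_lt.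
case: ifP => _ [near' step]; case: k kf => [|k] kf.
- by rewrite npre0 !addn0 subn0.
- have [near_k step_k] := IH x y.+1 (ltac:(lia)) near' k (ltac:(lia)).
  rewrite npre_cons /=; set p := npre _ k in near_k step_k *.
  have -> : y + (1 + p) = y.+1 + p by lia.
  by have -> : x + k.+1 - (1 + p) = x + k - p by lia.
- by rewrite npre0 !addn0 subn0.
have [near_k step_k] := IH x.+1 y (ltac:(lia)) near' k (ltac:(lia)).
rewrite npre_cons /= add0n; set p := npre _ k in near_k step_k *.
by have -> : x + k.+1 - p = x.+1 + k - p by lia.
Qed.

Lemma dyck_near_diagonal k : 0 < n -> k <= n -> near_diagonal (k - npre P k) (npre P k).
Proof.
move=> n_gt0 kn; have near0 : near_diagonal 0 0 by split; lia.
by have [] := walk_near_diagonal (f := n) (x := 0) (y := 0) erefl near0 kn.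
Qed.

Lemma dyck_step k : k < n ->
  if nth false P k then (npre P k).+1 * d1 <= (k - npre P k) * d2
  else (k - npre P k) * d2 < (npre P k).+1 * d1.
Proof.
move=> kn; have near0 : near_diagonal 0 0 by split; lia.
by have [_] := walk_near_diagonal (f := n) (x := 0) (y := 0) erefl near0 (ltnW kn); apply.
Qed.

Lemma npre_dyck_total : 0 < n -> npre P n = d2.
Proof.
move=> n_gt0; have [y_le _ above] := dyck_near_diagonal n_gt0 (leqnn n); have := npre_le P n.
move: y_le above; set y := npre P n => y_le above y_n.
apply/eqP; rewrite eqn_leq y_le leqNgt; apply/negP => y_lt.
have x_ge : d1.+1 <= n - y by lia.
have := leq_mul x_ge (leqnn d2); have := leq_mul y_lt (leqnn d1).
by rewrite !mulSn; lia.
Qed.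

End DyckPath.

Lemma arc_slope_arith d1 d2 xe ye xf yf E N :
  ye * d1 <= xe * d2 -> xe * d2 < ye.+1 * d1 ->
  yf.+1 * d1 <= xf * d2 -> xf * d2 < yf * d1 + d1 + d2 ->
  xe + E = xf -> ye + N = yf.+1 ->
  d2 * E < d2 + d1 * N /\ d1 * N < d1 + d2 * E.
Proof.
move=> below_e east_e north_f above_f eqE eqN.
have := congr1 (muln d2) eqE; have := congr1 (muln d1) eqN; rewrite !mulnDr.
by split; lia.
Qed.

Section DyckArcs.
Variables d1 d2 : nat.
Local Notation n := (d1 + d2).
Local Notation P := (dyck_path d1 d2).
Local Notation north := (@isN d1 d2).

Lemma segsum_cntN_dyck (b : 'I_n) k :
  val b = 0 -> k <= n -> segsum b (cntN north) 0 k = npre P k.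
Proof.
move=> b0 kn; apply: eq_big_nat => i /andP [_ ik].
rewrite /= /isN; congr (nat_of_bool (nth _ _ _)).
by rewrite /cshift /= b0 add0n modn_small // (leq_trans ik kn).
Qed.

Lemma segsum_cntE_dyck (b : 'I_n) k :
  val b = 0 -> k <= n -> segsum b (cntE north) 0 k = k - npre P k.
Proof.
move=> b0 kn; have := segsum_cntEN north b (leq0n k).
by rewrite segsum_cntN_dyck //; lia.
Qed.

Lemma dyck_east_point (e : 'I_n) : ~~ north e ->
  npre P e * d1 <= (e - npre P e) * d2 /\ (e - npre P e) * d2 < (npre P e).+1 * d1.
Proof.
move=> eE; have n_gt0 : 0 < n := leq_ltn_trans (leq0n _) (ltn_ord e).
have [_ below _] := dyck_near_diagonal n_gt0 (ltnW (ltn_ord e)).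
by have := dyck_step (ltn_ord e); rewrite -[nth _ _ e]/(isN e) (negbTE eE).
Qed.

Lemma dyck_north_point (f : 'I_n) : north f ->
  (npre P f).+1 * d1 <= (f - npre P f) * d2 /\
  (f - npre P f) * d2 < npre P f * d1 + d1 + d2.
Proof.
move=> fN; have n_gt0 : 0 < n := leq_ltn_trans (leq0n _) (ltn_ord f).
have [_ _ above] := dyck_near_diagonal n_gt0 (ltnW (ltn_ord f)).
by have := dyck_step (ltn_ord f); rewrite -[nth _ _ f]/(isN f) fN.
Qed.

Lemma dyck_arc_slope (e f : 'I_n) : ~~ north e -> north f ->
  let E := \sum_(i in arc e f) cntE north i in
  let N := \sum_(i in arc e f) cntN north i in
  d2 * E < d2 + d1 * N /\ d1 * N < d1 + d2 * E.
Proof.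
move=> eE fN E N; rewrite {}/E {}/N.
have n_gt0 : 0 < n := leq_ltn_trans (leq0n _) (ltn_ord e).
pose b0 : 'I_n := Ordinal n_gt0; rewrite !(@sum_arc_origin _ b0 e f _ erefl).
have X k : k <= n -> segsum b0 (cntE north) 0 k = k - npre P k.
  by move=> kn; apply: segsum_cntE_dyck.
have Y k : k <= n -> segsum b0 (cntN north) 0 k = npre P k.
  by move=> kn; apply: segsum_cntN_dyck.
have [below_e east_e] := dyck_east_point eE; have [north_f above_f] := dyck_north_point fN.
have Yf1 : npre P f.+1 = (npre P f).+1 by rewrite npreS -[nth _ _ f]/(isN f) fN addn1.
have Yf : segsum b0 (cntN north) 0 f.+1 = (npre P f).+1 by rewrite Y // Yf1.
have Xf : segsum b0 (cntE north) 0 f.+1 = f - npre P f by rewrite X // Yf1 subSS.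
have en : e <= n := ltnW (ltn_ord e).
have Xe : segsum b0 (cntE north) 0 e = e - npre P e := X e en.
have Ye : segsum b0 (cntN north) 0 e = npre P e := Y e en.
case: (leqP e f) => ef.
  have -> : e + (cdist e f).+1 = f.+1 by rewrite /cdist ef; lia.
  have ef1 : e <= f.+1 := leqW ef.
  apply: arc_slope_arith below_e east_e north_f above_f _ _.
    by rewrite -Xe -Xf -segsum_cat.
  by rewrite -Ye -Yf -segsum_cat.
(* A wrapping arc ends at the point of f translated by (d1, d2), which lies in the same
   position relative to the diagonal. *)
have -> : e + (cdist e f).+1 = f.+1 + n.
  by rewrite /cdist leqNgt ef /=; have := ltn_ord e; lia.
have wrap F : segsum b0 F e (f.+1 + n) = segsum b0 F e n + segsum b0 F 0 f.+1.
  rewrite (segsum_cat _ _ en (leq_addl _ _)).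
  by have := segsum_addn b0 F 0 f.+1; rewrite add0n => ->.
have Xn : e - npre P e + segsum b0 (cntE north) e n = d1.
  by rewrite -Xe -segsum_cat // X // npre_dyck_total // addnK.
have Yn : npre P e + segsum b0 (cntN north) e n = d2.
  by rewrite -Ye -segsum_cat // Y // npre_dyck_total.
rewrite !wrap; set xe := e - npre P e in below_e east_e Xn *.
set xf := f - npre P f in north_f above_f Xf *.
by apply: (@arc_slope_arith d1 d2 xe (npre P e) (xf + d1) (npre P f + d2)); lia.
Qed.

End DyckArcs.

Lemma pick_argminP (T : finType) (P : pred T) (F : T -> nat) :
  match [pick x | P x && [forall y, P y ==> (F x <= F y)]] with
  | Some x => P x /\ forall y, P y -> F x <= F y
  | None => forall y, ~~ P y
  end.
Proof.
case: pickP => [x /andP [Px /forallP min_x]|none].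
  by split=> // y Py; apply: (implyP (min_x y)).
move=> y; apply/negP => Py; have [x Px min_x] := arg_minnP F Py.
by move/negP: (none x); apply; rewrite Px; apply/forallP => z; apply/implyP/min_x.
Qed.

Lemma sum_setI_pred (T : finType) (A : {set T}) (P : pred T) (F : T -> nat) :
  \sum_(i in A :&: [set i | P i]) F i = \sum_(i in A) (if P i then F i else 0).
Proof.
rewrite big_mkcond [RHS]big_mkcond; apply: eq_bigr => i _.
by rewrite !inE; case: (i \in A); case: (P i).
Qed.

Lemma wt_eq0 n (w : 'I_n -> nat) A v : wt w A = 0 -> v \in A -> w v = 0.
Proof. by move/eqP; rewrite /wt sum_nat_eq0 => /forall_inP min_w /min_w /eqP. Qed.

Section Translation.
Variables (d1 d2 : nat) (w : 'I_(d1 + d2) -> nat).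
Local Notation n := (d1 + d2).
Local Notation north := (@isN d1 d2).
Implicit Types (A : {set 'I_n}).

Lemma card_setI_PN A : #|A :&: PN d1 d2| = \sum_(i in A) cntN north i.
Proof. by rewrite -sum1_card /PN sum_setI_pred; apply: eq_bigr => i _ /=; case: isN. Qed.

Lemma card_setI_PE A : #|A :&: PE d1 d2| = \sum_(i in A) cntE north i.
Proof. by rewrite -sum1_card /PE sum_setI_pred; apply: eq_bigr => i _ /=; case: isN. Qed.

Lemma wt_setI_PN A : wt w (A :&: PN d1 d2) = \sum_(i in A) wtN north w i.
Proof. by rewrite /wt /PN sum_setI_pred. Qed.

Lemma wt_setI_PE A : wt w (A :&: PE d1 d2) = \sum_(i in A) wtE north w i.
Proof. by rewrite /wt /PE sum_setI_pred; apply: eq_bigr => i _ /=; case: isN. Qed.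

Lemma wt_PN : wt w (PN d1 d2) = \sum_i wtN north w i.
Proof. by rewrite /wt big_mkcond; apply: eq_bigr => i _; rewrite inE. Qed.

Lemma wt_PE : wt w (PE d1 d2) = \sum_i wtE north w i.
Proof. by rewrite /wt big_mkcond; apply: eq_bigr => i _; rewrite inE /=; case: isN. Qed.

Lemma shadow_cand_shE u v : shadow_cand north w u v = shE_cand w u v.
Proof. by rewrite /shadow_cand /shE_cand inE card_setI_PN wt_setI_PE. Qed.

Lemma shadow_cand_rev_shN u f :
  shadow_cand (rev_north north) (rev_wt w) (rev_ord f) (rev_ord u) = shN_cand w u f.
Proof.
rewrite /shadow_cand /shN_cand inE /rev_north rev_ordK card_setI_PE wt_setI_PN.
rewrite !sum_arc_rev; congr (_ && (_ == _)); apply: eq_bigr => i _.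
  exact: cntN_rev.
exact: wtE_rev.
Qed.

Lemma compatible_word : compatible w -> word_compatible north w.
Proof.
move=> compat u v uE vN wuv.
have [u_in v_in] : u \in PE d1 d2 /\ v \in PN d1 d2 by rewrite !inE.
have [e e_in alt] := compat u v u_in v_in wuv.
by exists e => //; move: alt; rewrite !inE card_setI_PN wt_setI_PE card_setI_PE wt_setI_PN.
Qed.

Lemma mem_sh_east e v : e \in PE d1 d2 -> v \in sh w e ->
  0 < w e /\ forall v', shE_cand w e v' -> v \in arc e v'.
Proof.
move=> eE; rewrite /sh lt0n; case: eqP => [_|_]; first by rewrite inE.
rewrite eE; have := pick_argminP (shE_cand w e) (fun v => #|arc e v|) => /=.
case: (pick _) => [v0 [_ min_v0]|no_cand] v_in; split => // v' cand_v'.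
  by apply: mem_arc_card_le (min_v0 _ cand_v') _; move: v_in; rewrite inE => /andP [].
by have := no_cand v'; rewrite cand_v'.
Qed.

Lemma mem_sh_north f u : f \in PN d1 d2 -> u \in sh w f ->
  0 < w f /\ forall u', shN_cand w u' f -> u \in arc u' f.
Proof.
move=> fN; rewrite /sh lt0n; case: eqP => [_|_]; first by rewrite inE.
have -> : (f \in PE d1 d2) = false by move: fN; rewrite !inE => ->.
have := pick_argminP (fun u => shN_cand w u f) (fun u => #|arc u f|) => /=.
case: (pick _) => [u0 [_ min_u0]|no_cand] u_in; split => // u' cand_u'.
  by apply: mem_arc_card_le_end (min_u0 _ cand_u') _; move: u_in; rewrite inE => /andP [].
by have := no_cand u'; rewrite cand_u'.
Qed.

Lemma covered_east : wt w (PN d1 d2 :\: shset w (PE d1 d2)) = 0 -> shadow_covered north w.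
Proof.
move=> sh0 v vN vw; have v_sh : v \in shset w (PE d1 d2).
  apply: contraT => v_out.
  have v_in : v \in PN d1 d2 :\: shset w (PE d1 d2) by rewrite !inE v_out vN.
  by rewrite (wt_eq0 sh0 v_in) in vw.
case/bigcupP: v_sh => e eE /(mem_sh_east eE) [ew before_cands].
exists e; first by move: eE; rewrite inE => ->.
by apply: shadow_len_ge => v'; rewrite shadow_cand_shE; apply: before_cands.
Qed.

Lemma covered_rev : wt w (PE d1 d2 :\: shset w (PN d1 d2)) = 0 ->
  shadow_covered (rev_north north) (rev_wt w).
Proof.
move=> sh0 v' v'E vw; set v := rev_ord v' in v'E vw.
have v_sh : v \in shset w (PN d1 d2).
  apply: contraT => v_out.
  have v_in : v \in PE d1 d2 :\: shset w (PN d1 d2) by rewrite !inE v_out.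
  by rewrite /rev_wt (wt_eq0 sh0 v_in) in vw.
case/bigcupP: v_sh => f fN /(mem_sh_north fN) [fw before_cands].
exists (rev_ord f).
  by rewrite /rev_north /rev_wt rev_ordK negbK fw andbT; move: fN; rewrite inE.
apply: shadow_len_ge => x; rewrite -(rev_ordK x) shadow_cand_rev_shN => /before_cands.
by rewrite -mem_arc_rev /v rev_ordK.
Qed.

Lemma dyck_counts : 0 < n -> \sum_i cntN north i = d2 /\ \sum_i cntE north i = d1.
Proof.
move=> n_gt0; pose b0 : 'I_n := Ordinal n_gt0.
have cntN_total : \sum_i cntN north i = d2.
  by rewrite -(segsum_full b0) segsum_cntN_dyck // npre_dyck_total.
split => //; have := segsum_cntEN north b0 (leq0n n); rewrite !segsum_full cntN_total; lia.
Qed.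

Lemma rev_dyck_slope : slope_bounded (rev_north north) d2 d1.
Proof.
move=> e f eE fN; rewrite !(sum_arc_revE e f).
set A := arc _ _; have [_] := dyck_arc_slope fN (negPn eE); rewrite -/A.
have -> : \sum_(i in A) cntE (rev_north north) (rev_ord i) = \sum_(i in A) cntN north i.
  by apply: eq_bigr => i _; apply: cntE_rev.
have -> : \sum_(i in A) cntN (rev_north north) (rev_ord i) = \sum_(i in A) cntE north i.
  by apply: eq_bigr => i _; apply: cntN_rev.
by [].
Qed.

Lemma weight_pos p q : (p, q) != (0, 0) -> wt w (PN d1 d2) = p -> wt w (PE d1 d2) = q ->
  0 < n /\ 0 < \sum_i wtN north w i + \sum_i wtE north w i.
Proof.
move=> pq wt_p wt_q; have wt_pos : 0 < \sum_i wtN north w i + \sum_i wtE north w i.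
  by move: pq; rewrite -wt_p -wt_q wt_PN wt_PE xpair_eqE negb_and -!lt0n addn_gt0.
split=> //; move: wt_pos; rewrite -big_split => /sum_gt0_witness [i _].
exact: leq_ltn_trans (ltn_ord i).
Qed.

Lemma CG0plus_slope p q : (p, q) != (0, 0) -> CG0plus d1 d2 p q w -> d2 * p < d1 * q.
Proof.
move=> pq [compat wtN_p wtE_q sh0]; have [n_gt0 wt_pos] := weight_pos pq wtN_p wtE_q.
have [cntN_total cntE_total] := dyck_counts n_gt0.
rewrite -wtN_p -wtE_q wt_PN wt_PE.
apply: (weighted_slope_lt (compatible_word compat) (covered_east sh0) _
  cntE_total cntN_total wt_pos).
by move=> e f eE fN; have [] := dyck_arc_slope eE fN.
Qed.

Lemma CG0minus_slope p q : (p, q) != (0, 0) -> CG0minus d1 d2 p q w -> d1 * q < d2 * p.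
Proof.
move=> pq [compat wtN_p wtE_q sh0]; have [n_gt0 wt_pos] := weight_pos pq wtN_p wtE_q.
have [cntN_total cntE_total] := dyck_counts n_gt0.
rewrite -wtN_p -wtE_q wt_PN wt_PE.
rewrite -(sum_rev_ordE (wtN_rev north w)) -(sum_rev_ordE (wtE_rev north w)).
rewrite -(sum_rev_ordE (cntN_rev north)) in cntE_total.
rewrite -(sum_rev_ordE (cntE_rev north)) in cntN_total.
apply: (weighted_slope_lt (rev_word_compatible (compatible_word compat)) (covered_rev sh0)
  rev_dyck_slope cntN_total cntE_total).
by rewrite addnC (sum_rev_ordE (wtN_rev north w)) (sum_rev_ordE (wtE_rev north w)).
Qed.

End Translation.

Theorem lemma5p18 (d1 d2 p q : nat) :
  (p, q) != (0, 0) ->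
  (q * d1 <= p * d2 -> forall w : 'I_(d1 + d2) -> nat, ~ CG0plus d1 d2 p q w) /\
  (p * d2 <= q * d1 -> forall w : 'I_(d1 + d2) -> nat, ~ CG0minus d1 d2 p q w).
Proof.
move=> pq; split=> le w.
  by move/(CG0plus_slope pq); lia.
by move/(CG0minus_slope pq); lia.
Qed.
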